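(* Let $(X,\|\cdot\|)$ be a Banach space. If every ordered pair $(A,B)$ of nonempty subsets of $X$ with $A$ convex has the $UC$ property, then $(X,\|\cdot\|)$ is a uniformly convex Banach space.
   Context: $\mathrm{dist}(A,B)=\inf\{\|a-b\|:a\in A,b\in B\}$. The ordered pair $(A,B)$ has the $UC$ property if for all sequences $\{x_n\},\{z_n\}\subset A$, $\{y_n\}\subset B$ with $\lim_n\|x_n-y_n\|=\lim_n\|z_n-y_n\|=\mathrm{dist}(A,B)$ one has $\lim_n\|x_n-z_n\|=0$. $X$ is uniformly convex if for every $\varepsilon\in(0,2]$, $\inf\{1-\|\frac{x+y}{2}\|: \|x\|,\|y\|\le1,\ \|x-y\|\ge\varepsilon\}>0$. *)

From HB Require Import structures.
From mathcomp Require Import all_boot all_order all_algebra.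
From mathcomp Require Import all_classical all_reals all_analysis.
Set Implicit Arguments. Unset Strict Implicit. Unset Printing Implicit Defensive.
Import Order.TTheory GRing.Theory Num.Theory.
Import numFieldNormedType.Exports.
Local Open Scope classical_set_scope.
Local Open Scope ring_scope.

Definition set_dist {R : realType} {X : normedModType R} (A B : set X) : R :=
  inf [set `|a - b| | a in A & b in B].

Definition UC_property {R : realType} {X : normedModType R} (A B : set X) :=
  forall (x z y : nat -> X),
    (forall n, A (x n)) -> (forall n, A (z n)) -> (forall n, B (y n)) ->
    (fun n => `|x n - y n|) @ \oo --> set_dist A B ->
    (fun n => `|z n - y n|) @ \oo --> set_dist A B ->
    (fun n => `|x n - z n|) @ \oo --> (0 : R).

(* Uniform convexity: for every eps in (0,2],
   inf { 1 - ||(x+y)/2|| : ||x||,||y|| <= 1, ||x-y|| >= eps } > 0,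
   the infimum taken in the extended reals (inf of the empty set = +oo). *)
Definition uniformly_convex {R : realType} (X : normedModType R) :=
  forall eps : R, 0 < eps -> eps <= 2 ->
    (0 < ereal_inf [set (1 - `|(2^-1 : R) *: (p.1 + p.2)|)%:E
                   | p in [set p : X * X | [/\ (`|p.1| <= 1)%R, (`|p.2| <= 1)%R
                                             & (eps <= `|p.1 - p.2|)%R]]])%E.

From HB Require Import structures.
From mathcomp Require Import all_boot all_order all_algebra.
From mathcomp Require Import all_classical all_reals all_analysis.
From mathcomp Require Import lra.
Import Order.TTheory GRing.Theory Num.Theory.
Import numFieldNormedType.Exports.
Local Open Scope classical_set_scope.
Local Open Scope ring_scope.

(* If X is not uniformly convex, there are x_n, y_n in the unit ball with
   ||x_n - y_n|| >= eps and ||m_n|| -> 1, where m_n = (x_n + y_n)/2.  Take A the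
   unit ball and B the set {||c|| >= 2}, so that dist(A,B) = 1, and let
   b_n = 2 m_n / ||m_n||.  Both ||x_n - b_n|| and ||y_n - b_n|| lie between 1
   and 1 + 2(1 - ||m_n||), hence tend to dist(A,B); the UC property of (A,B)
   then forces ||x_n - y_n|| -> 0, a contradiction. *)

Lemma cvg_harmonic_gap {R : realType} {u : R^nat} :
  (forall n, u n <= 1) -> (forall n, 1 - u n < harmonic n) -> u @ \oo --> (1 : R).
Proof.
move=> u1 gap.
apply: (squeeze_cvgr (f := fun n => 1 - harmonic n) _ _ (cvg_cst (1 : R))).
- by apply: nearW => n; rewrite u1 andbT; have := gap n; lra.
- by rewrite -[X in _ --> X]subr0; apply: cvgB; [exact: cvg_cst | exact: cvg_harmonic].
Qed.

Section NormedSpace.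
Context {R : realType} {X : normedModType R}.

Definition modulus_of_convexity (eps : R) : \bar R :=
  ereal_inf [set (1 - `|(2^-1 : R) *: (p.1 + p.2)|)%:E
            | p in [set p : X * X | [/\ `|p.1| <= 1, `|p.2| <= 1
                                      & eps <= `|p.1 - p.2|]]].

Lemma uniformly_convexE :
  uniformly_convex X =
  forall eps : R, 0 < eps -> eps <= 2 -> (0 < modulus_of_convexity eps)%E.
Proof. by []. Qed.

Lemma modulus_of_convexity_le0 (eps : R) :
  (modulus_of_convexity eps <= 0)%E ->
  exists x y : nat -> X, forall n,
    [/\ `|x n| <= 1, `|y n| <= 1, eps <= `|x n - y n|
      & 1 - `|(2^-1 : R) *: (x n + y n)| < harmonic n].
Proof.
move=> mod_le0.
suff /choice[p Hp] : forall n, exists p : X * X,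
    [/\ `|p.1| <= 1, `|p.2| <= 1, eps <= `|p.1 - p.2|
      & 1 - `|(2^-1 : R) *: (p.1 + p.2)| < harmonic n].
  by exists (fst \o p), (snd \o p).
move=> n; have : (modulus_of_convexity eps < (harmonic n)%:E)%E.
  by apply: le_lt_trans mod_le0 _; rewrite lte_fin harmonic_gt0.
by case/ereal_inf_lt => _ [p [p1 p2 p12] <-]; rewrite lte_fin; exists p.
Qed.

Lemma normr_normalize (v : X) : v != 0 -> `|(`|v|^-1 *: v)| = 1.
Proof.
move=> v0; rewrite normrZ normfV normr_id mulVf //.
by rewrite normr_eq0.
Qed.

Lemma normr_sub_normalize (v : X) :
  v != 0 -> `|v - `|v|^-1 *: v| = `|1 - `|v| |.
Proof.
move=> v0; have nv0 : `|v| != 0 by rewrite normr_eq0.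
rewrite -{1}[v]scale1r -scalerBl normrZ.
rewrite -[X in _ * X]normr_id -normrM mulrBl mul1r mulVf //.
by rewrite distrC.
Qed.

Lemma convex_normr_le (r : R) : convex_set [set a : X | `|a| <= r].
Proof.
move=> a c l; rewrite !inE /= => ar cr.
have l0 : 0 <= l%:num by apply: ge0.
have l1 : l%:num <= 1 by apply: le1.
apply: le_trans (ler_normD _ _) _; rewrite !normrZ /unstable.onem.
rewrite (ger0_norm l0) (@ger0_norm _ (1 - l%:num)); last by rewrite subr_ge0.
nra.
Qed.

Lemma set_dist_ball_shell (r s : R) {e : X} : e != 0 -> 0 <= r <= s ->
  set_dist [set a : X | `|a| <= r] [set c : X | s <= `|c|] = s - r.
Proof.
move=> e0 /andP[r0 rs]; rewrite /set_dist; set D := [set _ | _ in _ & _ in _].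
set u := `|e|^-1 *: e; have nu : `|u| = 1 by exact: normr_normalize.
have normrZu t : 0 <= t -> `|t *: u| = t.
  by move=> t0; rewrite normrZ nu mulr1 ger0_norm.
have Dsr : D (s - r).
  exists (r *: u); first by rewrite /= normrZu.
  exists (s *: u); first by rewrite /= normrZu //; lra.
  by rewrite -scalerBl normrZ nu mulr1 distrC ger0_norm // subr_ge0.
apply/eqP; rewrite eq_le ge_inf //=; last by exists 0 => _ [a _ [c _ <-]].
apply: lb_le_inf; first by exists (s - r).
move=> _ [a ar [c sc <-]]; apply: le_trans (_ : `|c| - `|a| <= _).
  by move: ar sc => /= ar sc; lra.
by rewrite distrC lerB_dist.
Qed.

Lemma normr_midpoint_le1 (z w : X) :
  `|z| <= 1 -> `|w| <= 1 -> `|(2^-1 : R) *: (z + w)| <= 1.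
Proof.
move=> z1 w1; rewrite normrZ ger0_norm ?invr_ge0 // ler_pdivrMl // mulr1.
by apply: le_trans (ler_normD _ _) _; lra.
Qed.

Lemma normalized_midpoint_dist (z w m : X) :
  (2^-1 : R) *: (z + w) = m -> m != 0 -> `|z| <= 1 -> `|w| <= 1 ->
  1 <= `|z - 2 *: (`|m|^-1 *: m)| <= 1 + 2 * (1 - `|m|).
Proof.
move=> <- {m}; set m := _ *: _; set b := 2 *: _ => m0 z1 w1.
have zw : z + w = 2 *: m by rewrite scalerA mulfV ?scale1r // pnatr_eq0.
have m1 : `|m| <= 1 by exact: normr_midpoint_le1.
have nb : `|b| = 2 by rewrite normrZ normr_normalize // mulr1 ger0_norm.
apply/andP; split.
  apply: le_trans (_ : `|b| - `|z| <= _); first lra.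
  by rewrite distrC lerB_dist.
have -> : z - b = - w + 2 *: (m - `|m|^-1 *: m).
  by rewrite scalerBr -zw [z + w]addrC addrA addKr.
apply: le_trans (ler_normD _ _) _.
rewrite normrN normrZ normr_sub_normalize // ger0_norm ?ger0_norm ?subr_ge0 //.
lra.
Qed.

Lemma UC_ball_shell_midpoint (x y m : nat -> X) :
  (forall n, (2^-1 : R) *: (x n + y n) = m n) ->
  UC_property [set a : X | `|a| <= 1] [set c : X | 2 <= `|c|] ->
  (forall n, `|x n| <= 1) -> (forall n, `|y n| <= 1) -> (forall n, m n != 0) ->
  (fun n => `|m n|) @ \oo --> (1 : R) ->
  (fun n => `|x n - y n|) @ \oo --> (0 : R).
Proof.
move=> mE UC x1 y1 m0 m_cvg; pose b n := 2 *: (`|m n|^-1 *: m n).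
have bound_cvg : (fun n => 1 + 2 * (1 - `|m n|)) @ \oo --> (1 : R).
  rewrite -[X in _ --> X]addr0 -(mulr0 2) -(subrr 1).
  by apply: cvgD; [exact: cvg_cst | apply: cvgM; [exact: cvg_cst | apply: cvgB]];
    [exact: cvg_cst | exact: m_cvg].
have dist_cvg (z w : nat -> X) : (forall n, `|z n| <= 1) -> (forall n, `|w n| <= 1) ->
    (forall n, (2^-1 : R) *: (z n + w n) = m n) ->
    (fun n => `|z n - b n|) @ \oo --> (1 : R).
  move=> z1 w1 zw; apply: (squeeze_cvgr _ (cvg_cst (1 : R)) bound_cvg).
  by apply: nearW => n; exact: normalized_midpoint_dist (zw n) (m0 n) (z1 n) (w1 n).
have dist_AB : set_dist [set a : X | `|a| <= 1] [set c : X | 2 <= `|c|] = 1.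
  by rewrite (set_dist_ball_shell 1 2 (m0 0%N)) //; lra.
apply: (UC x y b) => //; rewrite ?dist_AB.
- by move=> n; rewrite /b /= normrZ normr_normalize // mulr1 ger0_norm.
- exact: (dist_cvg x y).
- by apply: (dist_cvg y x) => // n; rewrite addrC.
Qed.

End NormedSpace.

Theorem corollary45 (R : realType) (X : completeNormedModType R) :
  (forall A B : set X, A !=set0 -> B !=set0 -> @convex_set R X A ->
     UC_property A B) ->
  uniformly_convex X.
Proof.
move=> UC; rewrite uniformly_convexE => eps eps0 _.
rewrite ltNge; apply/negP => /modulus_of_convexity_le0[x [y xy]].
have x1 n : `|x n| <= 1 by case: (xy n).
have y1 n : `|y n| <= 1 by case: (xy n).
pose m n := (2^-1 : R) *: (x n + y n).
have m_gap n : 1 - `|m n| < harmonic n by case: (xy n).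
have m1 n : `|m n| <= 1 by exact: normr_midpoint_le1.
have m0 n : m n != 0.
  have : harmonic n <= 1 :> R by rewrite /= invf_le1 ?ltr0Sn // ler1n.
  by rewrite -normr_gt0; have := m_gap n; lra.
have ball_shell : UC_property [set a : X | `|a| <= 1] [set c : X | 2 <= `|c|].
  apply: UC; last exact: convex_normr_le.
  - by exists 0; rewrite /= normr0.
  - exists (2 *: (`|m 0%N|^-1 *: m 0%N)).
    by rewrite /= normrZ normr_normalize // mulr1 ger0_norm.
have /cvgrPdist_lt/(_ eps eps0)[N _ /(_ N (leqnn N))] :=
  UC_ball_shell_midpoint x y m (fun=> erefl) ball_shell x1 y1 m0
    (cvg_harmonic_gap m1 m_gap).
by rewrite sub0r normrN normr_id; case: (xy N) => _ _ + _; lra.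
Qed.
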